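(* Let $\alpha\in\ell^2$, $\epsilon>0$ and $N\ge1$ an integer, and suppose that the $(\epsilon,L)$-sequence associated with $\alpha$ and $\epsilon$ has length at least $N$, i.e. $c_N<\infty$. Then $a_N(R_\alpha)\ge\epsilon/\sqrt2$.
   Context: $\mathbb{N}=\{0,1,2,\dots\}$; $\ell^2$ is the space of square-summable functions $\mathbb{N}\to\mathbb{C}$; $(R_\alpha f)(k)=\alpha_k\sum_{j=0}^kf(j)$. Approximation numbers: $a_{n+1}(T)=\inf\{\|T-P\|:P$ linear on $\ell^2$ with rank $\le n\}$. For a finite natural interval $I$: $\mu(I)=\sum_{k\in I}|\alpha_k|^2$, $\|f\|_{2,I}=(\sum_{k\in I}|f(k)|^2)^{1/2}$, $l(I,f)=\sum_{k\in I}\sum_{n\in I\setminus\{k\}}|\alpha_k\alpha_n\sum_{j=\min(k,n)+1}^{\max(k,n)}f(j)|^2$, $L(I)=(\sup_{\|f\|_{2,I}\le1}l(I,f)/\mu(I))^{1/2}$ (sup over $f$ supported in $I$; $L(I)=0$ if $\alpha$ vanishes on $I$). $(\epsilon,L)$-sequence: $c_0=0$, $c_{k+1}=\inf\{t\in\mathbb{N}:t>c_k,\ L([c_k,t-1])>\epsilon\}$ ($\inf\emptyset=+\infty$). *)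

From Stdlib Require Import Reals.
From Coquelicot Require Import Coquelicot.
Open Scope R_scope.

Fixpoint csum (n : nat) (F : nat -> C) : C :=
  match n with O => 0%C | S m => Cplus (csum m F) (F m) end.

Definition Rbar_sqrt (x : Rbar) : Rbar :=
  match x with Finite r => Finite (sqrt r) | p_infty => p_infty | m_infty => Finite 0 end.

Definition l2 (f : nat -> C) : Prop := ex_series (fun k => (Cmod (f k)) ^ 2).

Definition l2norm (f : nat -> C) : Rbar :=
  Rbar_sqrt (Sup_seq (fun n => Finite (sum_n (fun k => (Cmod (f k)) ^ 2) n))).

Definition Ralpha (alpha : nat -> C) (f : nat -> C) : nat -> C :=
  fun k => Cmult (alpha k) (sum_n f k).

Definition opnorm (A : (nat -> C) -> (nat -> C)) : Rbar :=
  Rbar_lub (fun x => exists f, l2 f /\ Rbar_le (l2norm f) (Finite 1) /\ x = l2norm (A f)).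

Definition lin_l2 (P : (nat -> C) -> (nat -> C)) : Prop :=
  (forall f, l2 f -> l2 (P f)) /\
  (forall f g (a : C), l2 f -> l2 g ->
     P (fun k => Cplus (f k) (Cmult a (g k))) = (fun k => Cplus (P f k) (Cmult a (P g k)))).

Definition rank_le (P : (nat -> C) -> (nat -> C)) (n : nat) : Prop :=
  exists v : nat -> (nat -> C), (forall i, (i < n)%nat -> l2 (v i)) /\
    forall f, l2 f -> exists c : nat -> C,
      P f = (fun k => csum n (fun i => Cmult (c i) (v i k))).

(* a_{n+1}(T) = inf { ||T - P|| : P linear on l^2, rank P <= n };
   approx_num T N = a_N(T)  (meaningful for N >= 1) *)
Definition approx_num (T : (nat -> C) -> (nat -> C)) (N : nat) : Rbar :=
  Rbar_glb (fun x => exists P, lin_l2 P /\ rank_le P (N - 1) /\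
                       x = opnorm (fun f k => Cminus (T f k) (P f k))).

Definition muI (alpha : nat -> C) (a b : nat) : R :=
  sum_n_m (fun k => (Cmod (alpha k)) ^ 2) a b.

Definition normI (f : nat -> C) (a b : nat) : R :=
  sqrt (sum_n_m (fun k => (Cmod (f k)) ^ 2) a b).

Definition lI (alpha : nat -> C) (a b : nat) (f : nat -> C) : R :=
  sum_n_m (fun k => sum_n_m (fun n =>
     if Nat.eqb n k then 0
     else (Cmod (Cmult (Cmult (alpha k) (alpha n))
                 (sum_n_m f (S (Nat.min k n)) (Nat.max k n)))) ^ 2) a b) a b.

Definition LI (alpha : nat -> C) (a b : nat) : Rbar :=
  if Req_EM_T (muI alpha a b) 0 then Finite 0
  else Rbar_sqrt (Lub_Rbar (fun x => exists f : nat -> C,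
          (forall k, (k < a \/ b < k)%nat -> f k = 0%C) /\
          normI f a b <= 1 /\ x = lI alpha a b f / muI alpha a b)).

(* m is the infimum in nat of {t | P t}, with None standing for +oo (inf of empty set) *)
Definition is_nat_inf (P : nat -> Prop) (m : option nat) : Prop :=
  match m with
  | Some t => P t /\ forall s, P s -> (t <= s)%nat
  | None => forall s, ~ P s
  end.

Definition eps_L_seq (alpha : nat -> C) (eps : R) (c : nat -> option nat) : Prop :=
  c O = Some O /\
  forall k, match c k with
            | None => c (S k) = None
            | Some ck => is_nat_inf (fun t => (ck < t)%nat /\
                              Rbar_lt (Finite eps) (LI alpha ck (t - 1))) (c (S k))
            end.

(* On each of the N consecutive intervals I_k = [c_k, c_(k+1) - 1] pick a unit vector g_k
   supported in I_k with l(I_k, g_k) > eps^2 mu(I_k).  A linear P of rank at most N - 1 kills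
   some combination f = sum_k b_k g_k with sum_k |b_k|^2 = 1, so ||f|| <= 1.  Since
   l(I, f) = sum_(k, n in I) |alpha_k (R f)(n) - alpha_n (R f)(k)|^2 <= 2 mu(I) ||R f||_I^2 by
   Lagrange's identity, ||(R - P) f||^2 >= sum_k ||R f||_(I_k)^2 >= sum_k |b_k|^2 eps^2 / 2
   = eps^2 / 2. *)

From Stdlib Require Import Reals Lia Lra Classical IndefiniteDescription FunctionalExtensionality.
From Coquelicot Require Import Coquelicot.
Open Scope R_scope.

Lemma csum_ext n (F G : nat -> C) :
  (forall k, (k < n)%nat -> F k = G k) -> csum n F = csum n G.
Proof.
  induction n as [|n IH]; intros H; simpl; [reflexivity|].
  rewrite IH by (intros; apply H; lia). rewrite H by lia. reflexivity.
Qed.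

Lemma csum_zero n (F : nat -> C) :
  (forall k, (k < n)%nat -> F k = 0%C) -> csum n F = 0%C.
Proof.
  intros H. rewrite (csum_ext n F (fun _ => 0%C)) by exact H. clear H.
  induction n as [|n IH]; simpl; [reflexivity|]. rewrite IH. ring.
Qed.

Lemma csum_plus n (F G : nat -> C) :
  csum n (fun k => F k + G k)%C = (csum n F + csum n G)%C.
Proof. induction n as [|n IH]; simpl; [ring|]. rewrite IH. ring. Qed.

Lemma csum_mult_l n (a : C) (F : nat -> C) :
  csum n (fun k => a * F k)%C = (a * csum n F)%C.
Proof. induction n as [|n IH]; simpl; [ring|]. rewrite IH. ring. Qed.

Lemma csum_comm n m (F : nat -> nat -> C) :
  csum n (fun k => csum m (F k)) = csum m (fun i => csum n (fun k => F k i)).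
Proof.
  induction n as [|n IH]; simpl.
  - symmetry. apply csum_zero. reflexivity.
  - rewrite IH, <- csum_plus. reflexivity.
Qed.

Lemma csum_single n (F : nat -> C) m :
  (m < n)%nat -> (forall k, (k < n)%nat -> k <> m -> F k = 0%C) -> csum n F = F m.
Proof.
  induction n as [|n IH]; simpl; intros Hm H; [lia|].
  destruct (Nat.eq_dec m n) as [->|Hne].
  - rewrite csum_zero by (intros; apply H; lia). ring.
  - rewrite IH by (try intros; try apply H; lia). rewrite (H n) by lia. ring.
Qed.

Lemma Cmult_eq0_reg_l (a z : C) : a <> 0%C -> (a * z)%C = 0%C -> z = 0%C.
Proof.
  intros Ha Haz. destruct (classic (z = 0%C)) as [|Hz]; [assumption|].
  exfalso. exact (Cmult_neq_0 a z Ha Hz Haz).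
Qed.

(* One step of Gaussian elimination: once [t] solves the pivot row [w] for the last unknown,
   any row [u] reduces to the row [w n * u - u n * w] in the first [n] unknowns. *)
Lemma csum_pivot n (u w g : nat -> C) (t : C) :
  (w n * t)%C = (- csum n (fun k => w k * g k))%C ->
  (w n * csum (S n) (fun k => u k * (if Nat.eq_dec k n then t else g k)))%C
  = csum n (fun k => (w n * u k - u n * w k) * g k)%C.
Proof.
  intros Ht. simpl.
  rewrite (csum_ext n _ (fun k => u k * g k)%C)
    by (intros k Hk; destruct (Nat.eq_dec k n); [lia|reflexivity]).
  rewrite (csum_ext n (fun k => (w n * u k - u n * w k) * g k)%C
                    (fun k => w n * (u k * g k) + (- u n) * (w k * g k))%C)
    by (intros; ring).
  rewrite csum_plus, !csum_mult_l.
  destruct (Nat.eq_dec n n) as [_|]; [|congruence].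
  replace (w n * (csum n (fun k => u k * g k) + u n * t))%C
    with (w n * csum n (fun k => u k * g k) + u n * (w n * t))%C by ring.
  rewrite Ht. ring.
Qed.

Lemma homogeneous_system_nontrivial m : forall n (a : nat -> nat -> C), (m < n)%nat ->
  exists b : nat -> C, (exists k, (k < n)%nat /\ b k <> 0%C) /\
    forall i, (i < m)%nat -> csum n (fun k => a i k * b k)%C = 0%C.
Proof.
  induction m as [|m IH]; intros n a Hn.
  { exists (fun _ => 1%C). split; [|intros; lia].
    exists 0%nat. split; [lia|]. intros H. injection H. lra. }
  destruct n as [|n]; [lia|].
  destruct (classic (exists i0, (i0 < S m)%nat /\ a i0 n <> 0%C)) as [(i0 & Hi0 & Hp)|Hcol].
  - (* eliminate the last unknown with row [i0]; [r] lists the other rows *)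
    set (r := fun i => if Nat.eq_dec i i0 then m else i).
    destruct (IH n (fun i k => a i0 n * a (r i) k - a (r i) n * a i0 k)%C ltac:(lia))
      as (g & (k0 & Hk0 & Hg) & Hred).
    set (t := (- csum n (fun k => a i0 k * g k) / a i0 n)%C).
    exists (fun k => if Nat.eq_dec k n then t else g k). split.
    { exists k0. split; [lia|]. destruct (Nat.eq_dec k0 n); [lia|exact Hg]. }
    intros j Hj.
    apply (Cmult_eq0_reg_l (a i0 n) _ Hp).
    rewrite (csum_pivot n (a j) (a i0)) by (unfold t; field; exact Hp).
    destruct (Nat.eq_dec j i0) as [->|Hne].
    + apply csum_zero. intros. ring.
    + set (i := if Nat.eq_dec j m then i0 else j).
      assert (Hi : (i < m)%nat) by (unfold i; destruct (Nat.eq_dec j m); lia).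
      assert (Hri : r i = j).
      { unfold r, i. destruct (Nat.eq_dec j m), (Nat.eq_dec _ i0); congruence. }
      rewrite <- Hri. exact (Hred i Hi).
  - exists (fun k => if Nat.eq_dec k n then 1%C else 0%C). split.
    { exists n. split; [lia|]. destruct (Nat.eq_dec n n); [|congruence].
      intros H. injection H. lra. }
    intros i Hi. simpl.
    rewrite csum_zero by (intros k Hk; destruct (Nat.eq_dec k n); [lia|ring]).
    destruct (Nat.eq_dec n n); [|congruence].
    destruct (classic (a i n = 0%C)) as [->|Hnz]; [ring|].
    exfalso. apply Hcol. eauto.
Qed.

Lemma sum_n_nonneg (u : nat -> R) n : (forall k, 0 <= u k) -> 0 <= sum_n u n.
Proof. intros H. rewrite sum_n_Reals. exact (cond_pos_sum u n H). Qed.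

Lemma sum_n_le_loc (u v : nat -> R) n :
  (forall k, (k <= n)%nat -> u k <= v k) -> sum_n u n <= sum_n v n.
Proof. intros H. rewrite !sum_n_Reals. exact (sum_Rle u v n H). Qed.

Lemma sum_n_le_mono (u : nat -> R) m n :
  (forall k, 0 <= u k) -> (m <= n)%nat -> sum_n u m <= sum_n u n.
Proof.
  intros Hu. induction 1 as [|n _ IH]; [lra|].
  rewrite sum_Sn. pose proof (Hu (S n)). change (plus ?x ?y) with (x + y). lra.
Qed.

Lemma sum_n_ge_term (u : nat -> R) k n :
  (forall k, 0 <= u k) -> (k <= n)%nat -> u k <= sum_n u n.
Proof.
  intros Hu Hk. apply Rle_trans with (sum_n u k); [|exact (sum_n_le_mono u k n Hu Hk)].
  destruct k as [|k]; [rewrite sum_O; lra|].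
  rewrite sum_Sn. pose proof (sum_n_nonneg u k Hu). change (plus ?x ?y) with (x + y). lra.
Qed.

Lemma sum_n_of_support (u : nat -> R) M n :
  (forall k, (M < k)%nat -> u k = 0) -> (M <= n)%nat -> sum_n u n = sum_n u M.
Proof.
  intros Hu. induction 1 as [|n Hn IH]; [reflexivity|].
  rewrite sum_Sn, IH, (Hu (S n)) by lia. apply Rplus_0_r.
Qed.

Lemma sum_n_blocks {G : AbelianMonoid} (u : nat -> G) (cc : nat -> nat) n :
  cc 0%nat = 0%nat -> (forall k, (k <= n)%nat -> (cc k < cc (S k))%nat) ->
  sum_n u (cc (S n) - 1) = sum_n (fun k => sum_n_m u (cc k) (cc (S k) - 1)) n.
Proof.
  intros H0 Hlt. induction n as [|n IH].
  - rewrite sum_O, H0. reflexivity.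
  - rewrite sum_Sn, <- IH by (intros; apply Hlt; lia).
    pose proof (Hlt n ltac:(lia)). pose proof (Hlt (S n) ltac:(lia)).
    unfold sum_n. rewrite (sum_n_m_Chasles u 0 (cc (S n) - 1)) by lia.
    replace (S (cc (S n) - 1)) with (cc (S n)) by lia. reflexivity.
Qed.

(* Coquelicot's sum lemmas specialised to [R] and [C]: stated generically, they produce
   equations in the carrier of an abstract structure, which [ring] does not recognise. *)
Lemma sum_n_m_Rext_loc (u v : nat -> R) a b :
  (forall k, (a <= k <= b)%nat -> u k = v k) -> sum_n_m u a b = sum_n_m v a b.
Proof. exact (sum_n_m_ext_loc u v a b). Qed.

Lemma sum_n_m_Rplus (u v : nat -> R) a b :
  sum_n_m (fun k => u k + v k) a b = sum_n_m u a b + sum_n_m v a b.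
Proof. exact (sum_n_m_plus (G := R_AbelianMonoid) u v a b). Qed.

Lemma sum_n_m_Rmult_l (c : R) (u : nat -> R) a b :
  sum_n_m (fun k => c * u k) a b = c * sum_n_m u a b.
Proof. exact (sum_n_m_mult_l (K := R_Ring) c u a b). Qed.

Lemma sum_n_m_double_prod (g h : nat -> R) a b :
  sum_n_m (fun k => sum_n_m (fun n => g k * h n) a b) a b
  = sum_n_m g a b * sum_n_m h a b.
Proof.
  rewrite (sum_n_m_ext _ (fun k => sum_n_m h a b * g k))
    by (intros k; rewrite sum_n_m_Rmult_l; apply Rmult_comm).
  rewrite sum_n_m_Rmult_l. apply Rmult_comm.
Qed.

Lemma sum_n_m_Csub (f : nat -> C) k n :
  (k <= n)%nat -> sum_n_m f (S k) n = (sum_n f n - sum_n f k)%C.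
Proof. exact (sum_n_m_sum_n (G := C_AbelianGroup) f k n). Qed.

Lemma sum_n_m_Cmult_l (c : C) (u : nat -> C) a b :
  sum_n_m (fun k => c * u k)%C a b = (c * sum_n_m u a b)%C.
Proof. exact (sum_n_m_mult_l (K := C_Ring) c u a b). Qed.

Lemma homogeneous_system_unit_solution n (a : nat -> nat -> C) :
  exists b : nat -> C, sum_n (fun k => Cmod (b k) ^ 2) n = 1 /\
    forall i, (i < n)%nat -> csum (S n) (fun k => a i k * b k)%C = 0%C.
Proof.
  destruct (homogeneous_system_nontrivial n (S n) a ltac:(lia)) as (b & (k0 & Hk0 & Hb) & Hsol).
  set (B := sum_n (fun k => Cmod (b k) ^ 2) n).
  assert (HB : 0 < B).
  { apply Rlt_le_trans with (Cmod (b k0) ^ 2).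
    - apply pow_lt, Cmod_gt_0, Hb.
    - apply (sum_n_ge_term (fun k => Cmod (b k) ^ 2)); [intros; apply pow2_ge_0|lia]. }
  exists (fun k => (RtoC (/ sqrt B) * b k)%C). split.
  - rewrite (sum_n_ext _ (fun k => / B * Cmod (b k) ^ 2)).
    + rewrite (sum_n_mult_l (K := R_Ring)). fold B. change (/ B * B = 1). field. lra.
    + intros k. rewrite Cmod_mult, Cmod_R, Rabs_pos_eq.
      * rewrite Rpow_mult_distr, pow_inv, pow2_sqrt by lra. reflexivity.
      * apply Rlt_le, Rinv_0_lt_compat, sqrt_lt_R0, HB.
  - intros i Hi.
    rewrite (csum_ext _ _ (fun k => RtoC (/ sqrt B) * (a i k * b k))%C) by (intros; ring).
    rewrite csum_mult_l, (Hsol i Hi). ring.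
Qed.

Definition lincomb (m : nat) (b : nat -> C) (G : nat -> nat -> C) : nat -> C :=
  fun j => csum m (fun k => b k * G k j)%C.

Lemma l2_of_support (f : nat -> C) M : (forall j, (M < j)%nat -> f j = 0%C) -> l2 f.
Proof.
  intros Hf. unfold l2. apply (ex_series_incr_n _ (S M)).
  apply (ex_series_ext (fun _ => 0)).
  { intros k. rewrite Hf by lia. rewrite Cmod_0. simpl. ring. }
  exists 0. apply (filterlim_ext (fun _ => 0)); [|apply filterlim_const].
  intros n. rewrite sum_n_const. simpl. ring.
Qed.

Lemma lin_l2_zero (P : (nat -> C) -> nat -> C) :
  lin_l2 P -> P (fun _ => 0%C) = (fun _ => 0%C).
Proof.
  intros [_ HP]. assert (Hz : l2 (fun _ => 0%C)) by (apply (l2_of_support _ 0); auto).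
  pose proof (HP _ _ (RtoC (-1)) Hz Hz) as E. cbv beta in E.
  assert (Hzero : (fun _ : nat => (0 + RtoC (-1) * 0)%C) = (fun _ => 0%C))
    by (apply functional_extensionality; intros; ring).
  rewrite Hzero in E.
  apply functional_extensionality. intros k.
  apply (f_equal (fun h => h k)) in E. rewrite E. ring.
Qed.

Lemma lin_l2_lincomb (P : (nat -> C) -> nat -> C) m (b : nat -> C) (G : nat -> nat -> C) M :
  lin_l2 P ->
  (forall k j, (k < m)%nat -> (M < j)%nat -> G k j = 0%C) ->
  P (lincomb m b G) = (fun j => csum m (fun k => b k * P (G k) j)%C).
Proof.
  intros HP HG. induction m as [|m IH]; [exact (lin_l2_zero P HP)|].
  assert (Hcomb : l2 (lincomb m b G)).
  { apply (l2_of_support _ M). intros j Hj. apply csum_zero. intros k Hk.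
    rewrite HG by lia. ring. }
  assert (Hlast : l2 (G m)) by (apply (l2_of_support _ M); intros; apply HG; lia).
  change (P (fun j => lincomb m b G j + b m * G m j)%C
          = (fun j => csum m (fun k => b k * P (G k) j) + b m * P (G m) j)%C).
  rewrite (proj2 HP _ _ (b m) Hcomb Hlast).
  rewrite IH by (intros; apply HG; lia). reflexivity.
Qed.

Lemma rank_le_kernel_unit_comb (P : (nat -> C) -> nat -> C) n (G : nat -> nat -> C) M :
  lin_l2 P -> rank_le P n ->
  (forall k j, (k <= n)%nat -> (M < j)%nat -> G k j = 0%C) ->
  exists b : nat -> C, sum_n (fun k => Cmod (b k) ^ 2) n = 1 /\
    P (lincomb (S n) b G) = (fun _ => 0%C).
Proof.
  intros HP (v & _ & Hv) HG.
  assert (Hcoord : forall k, exists d : nat -> C, (k <= n)%nat ->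
             P (G k) = (fun j => csum n (fun i => d i * v i j)%C)).
  { intros k. destruct (Nat.le_gt_cases k n) as [Hk|Hk].
    - destruct (Hv (G k)) as [d Hd]; [apply (l2_of_support _ M); auto|].
      exists d. intros _. exact Hd.
    - exists (fun _ => 0%C). lia. }
  destruct (functional_choice _ Hcoord) as [D HD].
  destruct (homogeneous_system_unit_solution n (fun i k => D k i)) as (b & Hb & Hsol).
  exists b. split; [exact Hb|].
  rewrite (lin_l2_lincomb P (S n) b G M HP) by (intros; apply HG; lia).
  apply functional_extensionality. intros j.
  rewrite (csum_ext _ _ (fun k => csum n (fun i => v i j * (D k i * b k))%C)).
  2: { intros k Hk. rewrite HD by lia. rewrite <- csum_mult_l.
       apply csum_ext. intros. ring. }
  rewrite csum_comm. apply csum_zero. intros i Hi.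
  rewrite csum_mult_l, (Hsol i Hi). ring.
Qed.

Lemma Rbar_lub_ub (E : Rbar -> Prop) x : E x -> Rbar_le x (Rbar_lub E).
Proof. unfold Rbar_lub. destruct (Rbar_ex_lub E) as [l Hl]. exact (proj1 Hl x). Qed.

Lemma Rbar_glb_greatest (E : Rbar -> Prop) m :
  (forall x, E x -> Rbar_le m x) -> Rbar_le m (Rbar_glb E).
Proof. unfold Rbar_glb. destruct (Rbar_ex_glb E) as [l Hl]. exact (proj2 Hl m). Qed.

Lemma l2norm_ge_partial (f : nat -> C) M :
  Rbar_le (sqrt (sum_n (fun k => Cmod (f k) ^ 2) M)) (l2norm f).
Proof.
  unfold l2norm.
  assert (H : Rbar_le (sum_n (fun k => Cmod (f k) ^ 2) M)
                (Sup_seq (fun n => Finite (sum_n (fun k => Cmod (f k) ^ 2) n))))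
    by (apply (Sup_seq_minor_le _ _ M); simpl; lra).
  destruct (Sup_seq _) as [r| |]; simpl in *; try tauto.
  apply sqrt_le_1_alt, H.
Qed.

Lemma l2norm_of_support (f : nat -> C) M : (forall j, (M < j)%nat -> f j = 0%C) ->
  l2norm f = Finite (sqrt (sum_n (fun k => Cmod (f k) ^ 2) M)).
Proof.
  intros Hf. set (u := fun k => Cmod (f k) ^ 2).
  assert (Hu : forall k, 0 <= u k) by (intros; apply pow2_ge_0).
  unfold l2norm. rewrite (is_sup_seq_unique _ (sum_n u M)); [reflexivity|].
  intros eps. pose proof (cond_pos eps). split.
  - intros n. change (sum_n u n < sum_n u M + eps). destruct (Nat.le_ge_cases n M) as [Hn|Hn].
    + pose proof (sum_n_le_mono u n M Hu Hn). lra.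
    + assert (Hsupp : forall k, (M < k)%nat -> u k = 0)
        by (intros k Hk; unfold u; rewrite Hf, Cmod_0 by exact Hk; ring).
      rewrite (sum_n_of_support u M n Hsupp Hn). lra.
  - exists M. change (sum_n u M - eps < sum_n u M). lra.
Qed.

Lemma Cmod_sqr_cross (uk un xk xn : C) :
  Cmod (uk * xn - un * xk)%C ^ 2 =
  Cmod uk ^ 2 * Cmod xn ^ 2 + Cmod xk ^ 2 * Cmod un ^ 2
  + -2 * Re (uk * Cconj xk) * Re (un * Cconj xn) + -2 * Im (uk * Cconj xk) * Im (un * Cconj xn).
Proof.
  rewrite !Cmod2_alt. destruct uk, un, xk, xn.
  unfold Cminus, Cmult, Cplus, Copp, Cconj, Re, Im; simpl. ring.
Qed.

(* Lagrange's identity: the double sum equals [2 |u|^2 |x|^2 - 2 |<u, x>|^2]. *)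
Lemma lagrange_ineq (u x : nat -> C) a b :
  sum_n_m (fun k => sum_n_m (fun n => Cmod (u k * x n - u n * x k)%C ^ 2) a b) a b
  <= 2 * sum_n_m (fun k => Cmod (u k) ^ 2) a b * sum_n_m (fun k => Cmod (x k) ^ 2) a b.
Proof.
  set (U := fun k => Cmod (u k) ^ 2). set (X := fun k => Cmod (x k) ^ 2).
  set (r := fun k => Re (u k * Cconj (x k))). set (s := fun k => Im (u k * Cconj (x k))).
  rewrite (sum_n_m_ext _ (fun k =>
     sum_n_m (fun n => U k * X n) a b + sum_n_m (fun n => X k * U n) a b
     + sum_n_m (fun n => (-2 * r k) * r n) a b + sum_n_m (fun n => (-2 * s k) * s n) a b)).
  2: { intros k. rewrite <- !sum_n_m_Rplus. apply sum_n_m_ext. intros n.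
       rewrite Cmod_sqr_cross. reflexivity. }
  rewrite !sum_n_m_Rplus, !sum_n_m_double_prod, !sum_n_m_Rmult_l.
  fold (sum_n_m U a b) (sum_n_m X a b).
  pose proof (pow2_ge_0 (sum_n_m r a b)). pose proof (pow2_ge_0 (sum_n_m s a b)). nra.
Qed.

Lemma lI_term_cross (alpha f : nat -> C) k n :
  (if Nat.eqb n k then 0
   else Cmod (alpha k * alpha n * sum_n_m f (S (Nat.min k n)) (Nat.max k n))%C ^ 2)
  = Cmod (alpha k * Ralpha alpha f n - alpha n * Ralpha alpha f k)%C ^ 2.
Proof.
  unfold Ralpha. destruct (Nat.eqb_spec n k) as [->|_].
  - unfold Cminus. rewrite Cplus_opp_r, Cmod_0. ring.
  - destruct (Nat.lt_ge_cases k n) as [H|H].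
    + rewrite Nat.min_l, Nat.max_r, sum_n_m_Csub by lia.
      f_equal. f_equal. ring.
    + rewrite Nat.min_r, Nat.max_l, sum_n_m_Csub by lia.
      rewrite <- Cmod_opp. f_equal. f_equal. ring.
Qed.

Lemma lI_eq_cross (alpha f : nat -> C) a b :
  lI alpha a b f = sum_n_m (fun k => sum_n_m (fun n =>
    Cmod (alpha k * Ralpha alpha f n - alpha n * Ralpha alpha f k)%C ^ 2) a b) a b.
Proof.
  apply sum_n_m_Rext_loc. intros k _. apply sum_n_m_Rext_loc. intros n _.
  apply lI_term_cross.
Qed.

Lemma lI_le (alpha f : nat -> C) a b :
  lI alpha a b f <= 2 * muI alpha a b * sum_n_m (fun k => Cmod (Ralpha alpha f k) ^ 2) a b.
Proof. rewrite lI_eq_cross. apply lagrange_ineq. Qed.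

Lemma lI_ext_loc (alpha f g : nat -> C) a b :
  (forall j, (a <= j <= b)%nat -> f j = g j) -> lI alpha a b f = lI alpha a b g.
Proof.
  intros Hfg. apply sum_n_m_Rext_loc. intros k Hk. apply sum_n_m_Rext_loc. intros n Hn.
  rewrite (sum_n_m_ext_loc f g) by (intros j Hj; apply Hfg; lia). reflexivity.
Qed.

Lemma lI_scal (alpha g : nat -> C) (c : C) a b :
  lI alpha a b (fun j => c * g j)%C = Cmod c ^ 2 * lI alpha a b g.
Proof.
  unfold lI. rewrite <- sum_n_m_Rmult_l. apply sum_n_m_Rext_loc. intros k _.
  rewrite <- sum_n_m_Rmult_l. apply sum_n_m_Rext_loc. intros n _.
  destruct (Nat.eqb n k); [ring|].
  rewrite sum_n_m_Cmult_l, !Cmod_mult. ring.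
Qed.

Lemma muI_nonneg alpha a b : 0 <= muI alpha a b.
Proof.
  apply Rle_trans with (sum_n_m (fun _ => 0) a b).
  - rewrite sum_n_m_const. lra.
  - apply sum_n_m_le. intros; apply pow2_ge_0.
Qed.

Lemma normI_le1 (g : nat -> C) a b :
  normI g a b <= 1 -> sum_n_m (fun k => Cmod (g k) ^ 2) a b <= 1.
Proof.
  unfold normI. set (S := sum_n_m _ a b). intros H.
  destruct (Rle_or_lt S 0) as [|HS]; [lra|].
  rewrite <- (sqrt_sqrt S) by lra. pose proof (sqrt_pos S). nra.
Qed.

Definition test_vector (alpha : nat -> C) (eps : R) (a b : nat) (g : nat -> C) : Prop :=
  (forall j, (j < a \/ b < j)%nat -> g j = 0%C) /\ normI g a b <= 1 /\
  eps ^ 2 * muI alpha a b < lI alpha a b g.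

Lemma test_vector_muI_pos alpha eps a b g : test_vector alpha eps a b g -> 0 < muI alpha a b.
Proof.
  intros (_ & _ & Hl). pose proof (muI_nonneg alpha a b) as Hmu.
  destruct (Req_dec (muI alpha a b) 0) as [H0|]; [|lra].
  pose proof (lI_le alpha g a b) as Hle. rewrite H0 in Hl, Hle. lra.
Qed.

Lemma LI_gt_test_vector alpha eps a b :
  0 < eps -> Rbar_lt eps (LI alpha a b) -> exists g, test_vector alpha eps a b g.
Proof.
  intros Heps. unfold LI. destruct (Req_EM_T (muI alpha a b) 0) as [|Hmu]; [simpl; lra|].
  assert (Hmu_pos : 0 < muI alpha a b) by (pose proof (muI_nonneg alpha a b); lra).
  set (E := fun x => exists g : nat -> C, (forall k, (k < a \/ b < k)%nat -> g k = 0%C) /\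
          normI g a b <= 1 /\ x = lI alpha a b g / muI alpha a b).
  intros Hlt. destruct (classic (exists x, E x /\ eps ^ 2 < x)) as [(x & (g & Hg & Hn & ->) & Hx)|Hno].
  - exists g. split; [exact Hg|split; [exact Hn|]].
    apply (Rmult_lt_compat_r (muI alpha a b)) in Hx; [|exact Hmu_pos].
    unfold Rdiv in Hx. rewrite Rmult_assoc, Rinv_l in Hx by lra. lra.
  - assert (Hub : Rbar_le (Lub_Rbar E) (eps ^ 2)).
    { apply (proj2 (Lub_Rbar_correct E)). intros x Ex. simpl.
      destruct (Rle_or_lt x (eps ^ 2)); [assumption|]. exfalso. eauto. }
    fold E in Hlt. destruct (Lub_Rbar E) as [r| |]; cbn [Rbar_le Rbar_lt Rbar_sqrt] in *;
      try tauto; [|lra].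
    apply sqrt_le_1_alt in Hub. rewrite sqrt_pow2 in Hub by lra. lra.
Qed.

Lemma eps_L_seq_None alpha eps c k m :
  eps_L_seq alpha eps c -> c k = None -> (k <= m)%nat -> c m = None.
Proof.
  intros [_ Hc] Hk. induction 1 as [|m _ IH]; [exact Hk|].
  specialize (Hc m). rewrite IH in Hc. exact Hc.
Qed.

Lemma eps_L_seq_blocks alpha eps c n :
  eps_L_seq alpha eps c -> c (S n) <> None ->
  exists cc : nat -> nat, cc 0%nat = 0%nat /\ forall k, (k <= n)%nat ->
    (cc k < cc (S k))%nat /\ Rbar_lt eps (LI alpha (cc k) (cc (S k) - 1)).
Proof.
  intros Hc HcN. exists (fun k => match c k with Some t => t | None => 0%nat end).
  split; [rewrite (proj1 Hc); reflexivity|]. intros k Hk.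
  pose proof (proj2 Hc k) as Hstep.
  destruct (c k) as [ck|] eqn:Hck;
    [|exfalso; apply HcN; apply (eps_L_seq_None alpha eps c k); auto; lia].
  destruct (c (S k)) as [t|] eqn:Hck1;
    [|exfalso; apply HcN; apply (eps_L_seq_None alpha eps c (S k)); auto; lia].
  exact (proj1 Hstep).
Qed.

Lemma eps_L_seq_test_vectors alpha eps c n :
  0 < eps -> eps_L_seq alpha eps c -> c (S n) <> None ->
  exists (cc : nat -> nat) (G : nat -> nat -> C), cc 0%nat = 0%nat /\
    (forall k, (k <= n)%nat -> (cc k < cc (S k))%nat) /\
    (forall k, (k <= n)%nat -> test_vector alpha eps (cc k) (cc (S k) - 1) (G k)).
Proof.
  intros Heps Hc HcN. destruct (eps_L_seq_blocks alpha eps c n Hc HcN) as (cc & Hcc0 & Hblk).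
  assert (Hvec : forall k, exists g, (k <= n)%nat ->
                   test_vector alpha eps (cc k) (cc (S k) - 1) g).
  { intros k. destruct (Nat.le_gt_cases k n) as [Hk|Hk].
    - destruct (LI_gt_test_vector alpha eps _ _ Heps (proj2 (Hblk k Hk))) as [g Hg].
      exists g. intros _. exact Hg.
    - exists (fun _ => 0%C). lia. }
  destruct (functional_choice _ Hvec) as [G HG].
  exists cc, G. split; [exact Hcc0|split; intros k Hk; [apply Hblk, Hk|apply HG, Hk]].
Qed.

Section Blocks.

Variables (alpha : nat -> C) (eps : R) (n : nat) (cc : nat -> nat).
Variables (G : nat -> nat -> C) (b : nat -> C).
Hypothesis cc0 : cc 0%nat = 0%nat.
Hypothesis cc_lt : forall k, (k <= n)%nat -> (cc k < cc (S k))%nat.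
Hypothesis G_test : forall k, (k <= n)%nat -> test_vector alpha eps (cc k) (cc (S k) - 1) (G k).
Hypothesis b_unit : sum_n (fun k => Cmod (b k) ^ 2) n = 1.

Lemma cc_le k m : (k <= m <= S n)%nat -> (cc k <= cc m)%nat.
Proof.
  intros [Hkm Hm]. induction Hkm as [|m Hkm IH]; [lia|].
  pose proof (cc_lt m ltac:(lia)). specialize (IH ltac:(lia)). lia.
Qed.

Lemma test_vectors_support k j :
  (k <= n)%nat -> (cc (S n) - 1 < j)%nat -> G k j = 0%C.
Proof.
  intros Hk Hj. apply (proj1 (G_test k Hk)). right.
  pose proof (cc_le (S k) (S n) ltac:(lia)). lia.
Qed.

Lemma lincomb_support j : (cc (S n) - 1 < j)%nat -> lincomb (S n) b G j = 0%C.
Proof.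
  intros Hj. apply csum_zero. intros k Hk. rewrite test_vectors_support by lia. ring.
Qed.

Lemma lincomb_on_block k j : (k <= n)%nat -> (cc k <= j <= cc (S k) - 1)%nat ->
  lincomb (S n) b G j = (b k * G k j)%C.
Proof.
  intros Hk Hj. apply (csum_single (S n) (fun m => b m * G m j)%C k); [lia|].
  intros m Hm Hmk. rewrite (proj1 (G_test m ltac:(lia))); [ring|].
  destruct (Nat.lt_ge_cases m k).
  - right. pose proof (cc_le (S m) k ltac:(lia)). pose proof (cc_lt m ltac:(lia)). lia.
  - left. pose proof (cc_le (S k) m ltac:(lia)). pose proof (cc_lt k Hk). lia.
Qed.

Lemma lincomb_l2norm_le1 : Rbar_le (l2norm (lincomb (S n) b G)) 1.
Proof.
  rewrite (l2norm_of_support _ (cc (S n) - 1) lincomb_support).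
  change (sqrt (sum_n (fun j => Cmod (lincomb (S n) b G j) ^ 2) (cc (S n) - 1)) <= 1).
  rewrite <- sqrt_1. apply sqrt_le_1_alt.
  rewrite (sum_n_blocks _ cc n cc0 cc_lt), <- b_unit. apply sum_n_le_loc. intros k Hk.
  rewrite (sum_n_m_Rext_loc _ (fun j => Cmod (b k) ^ 2 * Cmod (G k j) ^ 2))
    by (intros j Hj; rewrite (lincomb_on_block k j Hk Hj), Cmod_mult; ring).
  rewrite sum_n_m_Rmult_l.
  pose proof (normI_le1 _ _ _ (proj1 (proj2 (G_test k Hk)))).
  pose proof (pow2_ge_0 (Cmod (b k))). nra.
Qed.

Lemma lincomb_Ralpha_ge :
  eps ^ 2 / 2 <= sum_n (fun j => Cmod (Ralpha alpha (lincomb (S n) b G) j) ^ 2) (cc (S n) - 1).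
Proof.
  rewrite (sum_n_blocks _ cc n cc0 cc_lt).
  apply Rle_trans with (sum_n (fun k => eps ^ 2 / 2 * Cmod (b k) ^ 2) n).
  { unfold sum_n in *. rewrite sum_n_m_Rmult_l, b_unit. lra. }
  apply sum_n_le_loc. intros k Hk.
  pose proof (lI_le alpha (lincomb (S n) b G) (cc k) (cc (S k) - 1)) as Hlag.
  rewrite (lI_ext_loc _ _ (fun j => b k * G k j)%C), lI_scal in Hlag
    by (intros j Hj; exact (lincomb_on_block k j Hk Hj)).
  pose proof (test_vector_muI_pos _ _ _ _ _ (G_test k Hk)) as Hmu.
  destruct (G_test k Hk) as (_ & _ & Hl).
  pose proof (pow2_ge_0 (Cmod (b k))). nra.
Qed.

End Blocks.

Theorem lemma4p3 (alpha : nat -> C) (eps : R) (N : nat) (c : nat -> option nat) :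
  l2 alpha -> 0 < eps -> (1 <= N)%nat ->
  eps_L_seq alpha eps c -> c N <> None ->
  Rbar_le (Finite (eps / sqrt 2)) (approx_num (Ralpha alpha) N).
Proof.
  intros _ Heps HN Hc HcN. destruct N as [|n]; [lia|].
  destruct (eps_L_seq_test_vectors alpha eps c n Heps Hc HcN) as (cc & G & Hcc0 & Hlt & Htest).
  unfold approx_num. apply Rbar_glb_greatest. intros x (P & HP & Hrank & ->).
  rewrite Nat.sub_succ, Nat.sub_0_r in Hrank.
  destruct (rank_le_kernel_unit_comb P n G (cc (S n) - 1) HP Hrank
              (test_vectors_support alpha eps n cc G Hcc0 Hlt Htest)) as (b & Hb & HPf).
  set (f := lincomb (S n) b G) in *.
  apply Rbar_le_trans with (l2norm (Ralpha alpha f)).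
  - eapply Rbar_le_trans; [|apply (l2norm_ge_partial _ (cc (S n) - 1))].
    change (eps / sqrt 2 <= sqrt (sum_n (fun j => Cmod (Ralpha alpha f j) ^ 2) (cc (S n) - 1))).
    rewrite <- (sqrt_pow2 eps), <- sqrt_div_alt by lra. apply sqrt_le_1_alt.
    exact (lincomb_Ralpha_ge alpha eps n cc G b Hcc0 Hlt Htest Hb).
  - apply Rbar_lub_ub. exists f. split.
    { exact (l2_of_support _ _ (lincomb_support alpha eps n cc G b Hcc0 Hlt Htest)). }
    split; [exact (lincomb_l2norm_le1 alpha eps n cc G b Hcc0 Hlt Htest Hb)|].
    rewrite HPf. f_equal. apply functional_extensionality. intros k. unfold Cminus. ring.
Qed.
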